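(* For $\mathbf{L}\in\{\mathbf{D},\mathbf{dD},\mathbf{Eq}\}$, $\mathbf{L}$ is complete w.r.t. the class of $L^+$-models.
   Context: Language $\langle\neg,\land,\lor,\to\rangle$ with formula set $Fm$. A union set-assignment is a map $s$ from formulae to subsets of a countable set $U$ with $s(\phi)=\bigcup\{s(p)\mid p\in Var(\phi)\}$. Epstein's dependence logic $\mathbf{D}$ is the logic of dependence models $\langle v,s\rangle$, where $s$ is a union set-assignment and $v:Fm\to\{0,1\}$ is Boolean on $\neg,\land,\lor$ with $v(\phi\to\psi)=v(\neg\phi\lor\psi)$ if $s(\phi)\supseteq s(\psi)$ and $0$ otherwise; the dual dependence logic $\mathbf{dD}$ and the logic of equality of content $\mathbf{Eq}$ are obtained by replacing the condition $s(\phi)\supseteq s(\psi)$ with $s(\phi)\subseteq s(\psi)$, respectively $s(\phi)=s(\psi)$ (Epstein gives complete Hilbert calculi for all three). A $D^+$-model is a tuple $\langle\mathbf{B}_2,\langle\mathscr{P}(U),\cup\rangle,N,v,s\rangle$ where $\mathbf{B}_2$ is the 2-element Boolean algebra, $N:Fm_{\langle\neg,\land,\lor,\to\rangle}\to Fm_{\langle\cup\rangle}$ is the translation that is the identity on variables, deletes negations and turns every binary connective into $\cup$, $s:Fm_{\langle\cup\rangle}\to\mathscr{P}(U)$ is a homomorphism, and $v:Fm\to\{0,1\}$ is a Boolean homomorphism w.r.t. $\neg,\land,\lor$ with $v(\phi\to\psi)=v(\neg\phi\lor\psi)$ if $s(N(\phi))\supseteq s(N(\psi))$ and $v(\phi\to\psi)=0$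 otherwise. $dD^+$-models (resp. $Eq^+$-models) are defined in the same way with the condition $s(N(\phi))\subseteq s(N(\psi))$ (resp. $s(N(\phi))=s(N(\psi))$). For $\mathbf{L}=\mathbf{D},\mathbf{dD},\mathbf{Eq}$ the corresponding class of $L^+$-models is that of $D^+$-, $dD^+$-, $Eq^+$-models respectively. *)

From Stdlib Require Import List Bool.
Import ListNotations.

Inductive Fm : Type :=
  | Var : nat -> Fm
  | Neg : Fm -> Fm
  | And : Fm -> Fm -> Fm
  | Or  : Fm -> Fm -> Fm
  | Imp : Fm -> Fm -> Fm.

Inductive FmU : Type :=
  | UVar : nat -> FmU
  | Cup  : FmU -> FmU -> FmU.

Fixpoint vars (f : Fm) : list nat :=
  match f with
  | Var p => [p]
  | Neg a => vars a
  | And a b | Or a b | Imp a b => vars a ++ vars b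
  end.

Fixpoint N (f : Fm) : FmU :=
  match f with
  | Var p => UVar p
  | Neg a => N a
  | And a b | Or a b | Imp a b => Cup (N a) (N b)
  end.

Definition subset {U : Type} (A B : U -> Prop) : Prop := forall x, A x -> B x.

Definition countable (U : Type) : Prop :=
  exists f : U -> nat, forall x y, f x = f y -> x = y.

Inductive logic : Type := LD | LdD | LEq.

(* The content condition for implication phi -> psi, with A = content of phi,
   B = content of psi. *)
Definition cond (L : logic) {U : Type} (A B : U -> Prop) : Prop :=
  match L with
  | LD => subset B A
  | LdD => subset A B
  | LEq => subset A B /\ subset B A
  end.

Definition valuation_ok (c : Fm -> Fm -> Prop) (v : Fm -> bool) : Prop :=
  (forall a, v (Neg a) = negb (v a)) /\
  (forall a b, v (And a b) = v a && v b) /\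
  (forall a b, v (Or a b) = v a || v b) /\
  (forall a b, c a b -> v (Imp a b) = v (Neg a) || v b) /\
  (forall a b, ~ c a b -> v (Imp a b) = false).

Definition union_assignment {U : Type} (s : Fm -> U -> Prop) : Prop :=
  forall f x, s f x <-> exists p, In p (vars f) /\ s (Var p) x.

Definition dep_model (L : logic) {U : Type} (v : Fm -> bool) (s : Fm -> U -> Prop)
  : Prop :=
  union_assignment s /\ valuation_ok (fun a b => cond L (s a) (s b)) v.

Definition cup_hom {U : Type} (s : FmU -> U -> Prop) : Prop :=
  forall a b x, s (Cup a b) x <-> (s a x \/ s b x).

(* L^+-models <B_2, <P(U), cup>, N, v, s>. *)
Definition plus_model (L : logic) {U : Type} (v : Fm -> bool) (s : FmU -> U -> Prop)
  : Prop :=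
  cup_hom s /\ valuation_ok (fun a b => cond L (s (N a)) (s (N b))) v.

Definition L_cons (L : logic) (Gamma : Fm -> Prop) (phi : Fm) : Prop :=
  forall (U : Type), countable U ->
  forall (v : Fm -> bool) (s : Fm -> U -> Prop),
    dep_model L v s -> (forall g, Gamma g -> v g = true) -> v phi = true.

Definition Lplus_cons (L : logic) (Gamma : Fm -> Prop) (phi : Fm) : Prop :=
  forall (U : Type), countable U ->
  forall (v : Fm -> bool) (s : FmU -> U -> Prop),
    plus_model L v s -> (forall g, Gamma g -> v g = true) -> v phi = true.

(* A dependence model ⟨v, s⟩ yields an L^+-model with the same valuation: extend
   the contents s(p) of the variables homomorphically to ∪-terms.  Since s is a
   union set-assignment, the content of N(φ) is then exactly s(φ), so the
   condition governing implications, and hence v itself, is unchanged.  Every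
   countermodel of L is thus a countermodel of the L^+-models. *)

From Stdlib Require Import List Bool.

Fixpoint cup_extension {U : Type} (s : Fm -> U -> Prop) (t : FmU) : U -> Prop :=
  match t with
  | UVar p => s (Var p)
  | Cup a b => fun x => cup_extension s a x \/ cup_extension s b x
  end.

Lemma cup_hom_cup_extension {U : Type} (s : Fm -> U -> Prop) :
  cup_hom (cup_extension s).
Proof. intros a b x; simpl; tauto. Qed.

Lemma cup_extension_N {U : Type} (s : Fm -> U -> Prop) (a : Fm) (x : U) :
  cup_extension s (N a) x <-> exists p, In p (vars a) /\ s (Var p) x.
Proof.
  induction a as [p | a IH | a IHa b IHb | a IHa b IHb | a IHa b IHb]; simpl;
    try (rewrite IHa, IHb; setoid_rewrite in_app_iff; firstorder).
  - split.
    + intro Hx; exists p; auto.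
    + intros [q [[<- | []] Hx]]; exact Hx.
  - exact IH.
Qed.

Lemma cup_extension_N_union {U : Type} (s : Fm -> U -> Prop) (a : Fm) (x : U) :
  union_assignment s -> (cup_extension s (N a) x <-> s a x).
Proof. intro Hs; rewrite cup_extension_N; symmetry; apply Hs. Qed.

Lemma cond_ext (L : logic) {U : Type} (A A' B B' : U -> Prop) :
  (forall x, A x <-> A' x) -> (forall x, B x <-> B' x) ->
  cond L A B <-> cond L A' B'.
Proof. intros HA HB; destruct L; unfold cond, subset; firstorder. Qed.

Lemma valuation_ok_ext (c c' : Fm -> Fm -> Prop) (v : Fm -> bool) :
  (forall a b, c a b <-> c' a b) -> valuation_ok c v -> valuation_ok c' v.
Proof.
  intros Hc (Hneg & Hand & Hor & Himp & Hnimp).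
  repeat split; auto.
  - intros a b; rewrite <- Hc; apply Himp.
  - intros a b; rewrite <- Hc; apply Hnimp.
Qed.

Lemma plus_model_of_dep_model (L : logic) {U : Type}
    (v : Fm -> bool) (s : Fm -> U -> Prop) :
  dep_model L v s -> plus_model L v (cup_extension s).
Proof.
  intros [Hs Hv]; split.
  - apply cup_hom_cup_extension.
  - revert Hv; apply valuation_ok_ext; intros a b.
    apply cond_ext; intro x; symmetry; apply cup_extension_N_union, Hs.
Qed.

Theorem mainTheorem5 :
  forall (L : logic) (Gamma : Fm -> Prop) (phi : Fm),
    Lplus_cons L Gamma phi -> L_cons L Gamma phi.
Proof.
  intros L Gamma phi Hplus U HU v s Hmodel HGamma.
  exact (Hplus U HU v (cup_extension s) (plus_model_of_dep_model L v s Hmodel) HGamma).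
Qed.
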